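(* Let $k\in\mathbb{N}$ and $n=3k+1$. Then $D_{\mathrm{lin}}(\mathrm{MINCUT}_n)\ge 2n-2$; that is, any deterministic linear query algorithm that correctly computes the minimum cut weight of every $n$-vertex weighted undirected graph must make at least $2n-2$ linear queries in the worst case.
   Context: An $n$-vertex weighted undirected graph $G=(V,w)$ is given by a vector $w\in\mathbb{R}_{\ge 0}^{\binom{n}{2}}$ assigning a nonnegative weight to each unordered pair of distinct vertices; for $\emptyset\ne X\subsetneq V$ the cut $\Delta(X)$ has weight equal to the sum of $w$ over pairs with exactly one endpoint in $X$. In $\mathrm{MINCUT}_n$ the input is such a graph and the required output is the minimum weight of a cut. A linear query is a vector $x\in\mathbb{R}^{\binom n2}$ and is answered by $\langle x,w\rangle$; queries may be chosen adaptively. $D_{\mathrm{lin}}(\mathrm{MINCUT}_n)$ is the minimum, over deterministic linear query algorithms that output the correct answer on every $n$-vertex weighted graph, of the maximum over inputs of the number of queries made. *)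

From HB Require Import structures.
From mathcomp Require Import all_boot all_order all_algebra.
From mathcomp Require Import reals.
Set Implicit Arguments. Unset Strict Implicit. Unset Printing Implicit Defensive.
Import Order.TTheory GRing.Theory Num.Theory.
Local Open Scope ring_scope.

(* Unordered pairs of distinct vertices of V = 'I_n, represented as (i,j) with i < j. *)
Definition Pair (n : nat) : finType := {p : 'I_n * 'I_n | (p.1 < p.2)%N}.

Definition cut_weight (R : realType) (n : nat) (w : Pair n -> R) (X : {set 'I_n}) : R :=
  \sum_(p : Pair n | (val p).1 \in X != ((val p).2 \in X)) w p.

Definition proper_nonempty (n : nat) (X : {set 'I_n}) : bool :=
  (X != set0) && (X != [set: 'I_n]).

Definition is_mincut (R : realType) (n : nat) (w : Pair n -> R) (v : R) : Prop :=
  (exists X : {set 'I_n}, proper_nonempty X /\ cut_weight w X = v) /\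
  (forall X : {set 'I_n}, proper_nonempty X -> v <= cut_weight w X).

Definition lin_answer (R : realType) (n : nat) (x w : Pair n -> R) : R :=
  \sum_(p : Pair n) x p * w p.

(* Deterministic adaptive linear query algorithms as decision trees: either
   output a value, or ask a linear query x and continue depending on the answer. *)
Inductive qtree (R : Type) (n : nat) : Type :=
| Leaf : R -> qtree R n
| Query : (Pair n -> R) -> (R -> qtree R n) -> qtree R n.

Fixpoint run (R : realType) (n : nat) (t : qtree R n) (w : Pair n -> R) : R :=
  match t with
  | Leaf v => v
  | Query x k => run (k (lin_answer x w)) w
  end.

Fixpoint num_queries (R : realType) (n : nat) (t : qtree R n) (w : Pair n -> R) : nat :=
  match t with
  | Leaf _ => 0%N
  | Query x k => (num_queries (k (lin_answer x w)) w).+1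
  end.

Definition nonneg_weights (R : realType) (n : nat) (w : Pair n -> R) : Prop :=
  forall p, 0 <= w p.

Definition solves_mincut (R : realType) (n : nat) (t : qtree R n) : Prop :=
  forall w : Pair n -> R, nonneg_weights w -> is_mincut w (run t w).

From mathcomp Require Import all_boot all_order all_algebra.
From mathcomp Require Import reals.
From mathcomp Require Import lra zify.

(* The hard input is the windmill: k copies of K_4 glued at a common hub 0,
   with unit weight on each of its 6k = 2n - 2 edges; every cut of it weighs at
   least 3, since it separates some vertex from the hub inside one K_4 block.
   If an algorithm asks fewer than 6k linear queries on the windmill, some
   nonzero perturbation c of the edge weights is orthogonal to all of them
   (linear algebra), so the algorithm gives the same answer on every input
   windmill + s c (adversary argument).  Taking the block of a largest
   coordinate of c, a case analysis on K_4 (vertex stars, then the three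
   perfect matchings) yields a step s keeping the weights nonnegative and a cut
   of weight below 3 inside that block: the algorithm errs on one input. *)

Set Implicit Arguments. Unset Strict Implicit. Unset Printing Implicit Defensive.
Import Order.TTheory GRing.Theory Num.Theory.
Local Open Scope ring_scope.

Section DecisionTrees.
Variables (R : realType) (n : nat).

Fixpoint queries (t : qtree R n) (w : Pair n -> R) : seq (Pair n -> R) :=
  match t with
  | Leaf _ => [::]
  | Query x k => x :: queries (k (lin_answer x w)) w
  end.

Lemma size_queries t w : size (queries t w) = num_queries t w.
Proof. by elim: t => //= x k ->. Qed.

Definition shift (w v : Pair n -> R) (s : R) : Pair n -> R := fun p => w p + s * v p.

Lemma lin_answer_shift x w v s :
  lin_answer x (shift w v s) = lin_answer x w + s * lin_answer x v.
Proof.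
rewrite /lin_answer mulr_sumr -big_split; apply: eq_bigr => p _.
by rewrite /shift mulrDr mulrCA.
Qed.

(* Adversary argument: moving the input along a direction orthogonal to every
   query asked on [w] changes no answer, hence not the output. *)
Lemma run_shift t w v s :
  (forall a, (a < size (queries t w))%N ->
     lin_answer (nth (fun=> 0) (queries t w) a) v = 0) ->
  run t (shift w v s) = run t w.
Proof.
elim: t => //= x k IH orth.
rewrite lin_answer_shift (orth 0%N) // mulr0 addr0; apply: IH => a.
exact: (orth a.+1).
Qed.

End DecisionTrees.

Lemma common_kernel (R : fieldType) (I : finType) (q : nat) (F : nat -> I -> R) :
  (q < #|I|)%N ->
  exists c : I -> R, (exists i, c i != 0) /\
    forall a, (a < q)%N -> \sum_i F a i * c i = 0.
Proof.
move=> q_lt.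
pose A : 'M[R]_(#|I|, q) := \matrix_(i, a) F a (enum_val i).
have KA : kermx A *m A = 0 := mulmx_ker A.
have : kermx A != 0.
  apply/eqP => K0; move: (mxrank_ker A); rewrite K0 mxrank0 => /esym/eqP.
  rewrite subn_eq0 => /leq_trans/(_ (rank_leq_col A)).
  by rewrite leqNgt q_lt.
case/matrix0Pn => r [i Kri].
exists (fun i => kermx A r (enum_rank i)); split.
  by exists (enum_val i); rewrite enum_valK.
move=> a a_lt; have := congr1 (fun M : 'M_(#|I|, q) => M r (Ordinal a_lt)) KA.
rewrite !mxE => KA0; rewrite -[RHS]KA0 (reindex (enum_val : 'I_#|I| -> I)); last first.
  by exists enum_rank => j _; rewrite ?enum_valK ?enum_rankK.
by apply: eq_bigr => j _; rewrite enum_valK mulrC [A _ _]mxE.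
Qed.

Section Extend.
Variables (R : pzRingType) (I J : finType) (f : I -> J).

(* Push a function on [I] forward along [f]: [extend g y] adds up [g] over the
   fibre of [y]; for injective [f] this is extension by zero. *)
Definition extend (g : I -> R) (y : J) : R := \sum_(i | f i == y) g i.

Lemma sum_extend (P : pred J) (h : J -> R) (g : I -> R) :
  \sum_(y | P y) h y * extend g y = \sum_(i | P (f i)) h (f i) * g i.
Proof.
rewrite [RHS](partition_big f P) //; apply: eq_bigr => y Py.
rewrite mulr_sumr; apply: eq_big => [i|i /eqP -> //].
by case: (f i =P y) => [->|]; rewrite ?Py ?eqxx ?andbF.
Qed.

Lemma extend_affine (g1 g2 : I -> R) (s : R) (y : J) :
  extend g1 y + s * extend g2 y = extend (fun i => g1 i + s * g2 i) y.
Proof. by rewrite /extend mulr_sumr -big_split. Qed.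

End Extend.

Lemma extend_ge0 (R : numDomainType) (I J : finType) (f : I -> J) (g : I -> R) y :
  (forall i, 0 <= g i) -> 0 <= extend f g y.
Proof. by move=> g_ge0; apply: sumr_ge0 => i _. Qed.

Lemma lin_answer_extend (R : realType) (n : nat) (I : finType) (f : I -> Pair n)
    (x : Pair n -> R) (g : I -> R) :
  lin_answer x (extend f g) = \sum_i x (f i) * g i.
Proof. exact: sum_extend. Qed.

Definition crosses (n : nat) (X : {set 'I_n}) (p : Pair n) : bool :=
  ((val p).1 \in X) != ((val p).2 \in X).

Lemma cut_weight_extend (R : realType) (n : nat) (I : finType) (f : I -> Pair n)
    (g : I -> R) (X : {set 'I_n}) :
  cut_weight (extend f g) X = \sum_(i | crosses X (f i)) g i.
Proof.
rewrite /cut_weight.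
under eq_bigr do rewrite -[extend _ _ _]mul1r.
by rewrite sum_extend; under eq_bigr do rewrite mul1r.
Qed.

Lemma cut_weight_shift (R : realType) (n : nat) (w v : Pair n -> R) s X :
  cut_weight (shift w v s) X = cut_weight w X + s * cut_weight v X.
Proof. by rewrite /cut_weight mulr_sumr -big_split. Qed.

Lemma sum_fibre (R : nmodType) (I J : finType) (i0 : I) (P : pred J) (F : I * J -> R) :
  \sum_(e | (e.1 == i0) && P e.2) F e = \sum_(q | P q) F (i0, q).
Proof.
rewrite -(@big_pred1_eq R 0 +%R _ i0 (fun i => \sum_(q | P q) F (i, q))) pair_big_dep.
by apply: eq_bigr => -[].
Qed.

Notation "''v' i" := (@Ordinal 4 i isT) (at level 0, i at level 0, format "''v' i").

Definition K4_edge (u v : 'I_4) (uv : (u < v)%N) : Pair 4 := exist _ (u, v) uv.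
Arguments K4_edge : clear implicits.

Notation "''e01'" := (K4_edge ord0 'v1 isT).
Notation "''e02'" := (K4_edge ord0 'v2 isT).
Notation "''e03'" := (K4_edge ord0 'v3 isT).
Notation "''e12'" := (K4_edge 'v1 'v2 isT).
Notation "''e13'" := (K4_edge 'v1 'v3 isT).
Notation "''e23'" := (K4_edge 'v2 'v3 isT).

Definition K4_edges : seq (Pair 4) := [:: 'e01; 'e02; 'e03; 'e12; 'e13; 'e23].

Lemma mem_K4_vertices (u : 'I_4) : u \in [:: ord0; 'v1; 'v2; 'v3].
Proof. by case: u => [[|[|[|[|?]]]] ?]. Qed.

Lemma mem_K4_edges (q : Pair 4) : q \in K4_edges.
Proof. by case: q => [[[[|[|[|[|?]]]] ?] [[|[|[|[|?]]]] ?]] ?]. Qed.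

Lemma uniq_K4_edges : uniq K4_edges.
Proof. by []. Qed.

Lemma card_Pair4 : #|Pair 4| = 6%N.
Proof.
rewrite cardT (perm_size (_ : perm_eq _ K4_edges)) //.
apply: uniq_perm; rewrite ?enum_uniq ?uniq_K4_edges // => q.
by rewrite mem_enum mem_K4_edges.
Qed.

Lemma perm_K4_edges : perm_eq (index_enum (Pair 4)) K4_edges.
Proof.
apply: uniq_perm; rewrite ?index_enum_uniq ?uniq_K4_edges // => q.
by rewrite mem_index_enum mem_K4_edges.
Qed.

Lemma cut_weight_K4 (R : realType) (g : Pair 4 -> R) (S : {set 'I_4}) :
  cut_weight g S =
    (if (ord0 \in S) != ('v1 \in S) then g 'e01 else 0) +
    (if (ord0 \in S) != ('v2 \in S) then g 'e02 else 0) +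
    (if (ord0 \in S) != ('v3 \in S) then g 'e03 else 0) +
    (if ('v1 \in S) != ('v2 \in S) then g 'e12 else 0) +
    (if ('v1 \in S) != ('v3 \in S) then g 'e13 else 0) +
    (if ('v2 \in S) != ('v3 \in S) then g 'e23 else 0).
Proof.
rewrite /cut_weight (perm_big K4_edges perm_K4_edges) !big_cons big_nil /=.
by case: (ord0 \in S); case: ('v1 \in S); case: ('v2 \in S); case: ('v3 \in S);
  rewrite /= ?addr0 ?add0r ?addrA.
Qed.

Lemma K4_cut_ge3 (R : realType) (S : {set 'I_4}) (u v : 'I_4) :
  (u \in S) != (v \in S) -> 3 <= cut_weight (fun=> 1 : R) S.
Proof.
move=> sep; have nonconst : ~~ [&& ('v1 \in S) == (ord0 \in S),
    ('v2 \in S) == (ord0 \in S) & ('v3 \in S) == (ord0 \in S)].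
  apply: contra sep => /and3P[/eqP S1 /eqP S2 /eqP S3].
  suff memS w : (w \in S) = (ord0 \in S) by rewrite !memS.
  by have := mem_K4_vertices w; rewrite !inE => /or4P[]/eqP->.
rewrite cut_weight_K4; move: nonconst.
by case: (ord0 \in S); case: ('v1 \in S); case: ('v2 \in S); case: ('v3 \in S) => //= _; lra.
Qed.

Ltac eval_K4_cut := rewrite !cut_weight_K4 !inE /=.

Lemma sign_flip (R : realDomainType) (r : R) : r != 0 ->
  exists sigma : R, `|sigma| = 1 /\ sigma * r < 0.
Proof.
move=> r0; have [r_gt0|r_le0] := ltP 0 r.
  by exists (-1); rewrite normrN normr1 mulN1r oppr_lt0.
by exists 1; rewrite normr1 mul1r lt_neqAle r0.
Qed.

Lemma unit_step_ge0 (R : realFieldType) (sigma m x : R) :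
  `|sigma| = 1 -> m != 0 -> `|x| <= `|m| -> 0 <= 1 + sigma / m * x.
Proof.
move=> sigma1 m0 xm; have : `|sigma / m * x| <= 1.
  by rewrite !normrM normfV sigma1 mul1r mulrC ler_pdivrMr ?mul1r ?normr_gt0.
by rewrite ler_norml => /andP[? _]; lra.
Qed.

Definition lighter_cut (R : realType) (a : Pair 4 -> R) (e0 : Pair 4)
    (S : {set 'I_4}) (sigma : R) : Prop :=
  [/\ S != set0, ord0 \notin S, `|sigma| = 1 &
      cut_weight (fun=> 1) S + sigma / a e0 * cut_weight a S < 3].

(* Key local lemma: any perturbation [a] of K_4 that is nonzero on some edge
   [e0] makes some hub-avoiding cut lighter than 3.  Either one of the four
   vertex stars has nonzero a-weight (choose the sign making that 3-cut
   lighter), or all stars vanish; this forces opposite edges to carry equal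
   a-weight, and the 4-cut avoiding [e0] and its opposite edge then has
   a-weight [-2 * a e0]. *)
Lemma K4_perturb (R : realType) (a : Pair 4 -> R) (e0 : Pair 4) : a e0 != 0 ->
  exists S sigma, lighter_cut a e0 S sigma.
Proof.
move=> ae0.
have star_cut (S : {set 'I_4}) (u : 'I_4) : u \in S -> ord0 \notin S ->
    cut_weight (fun=> 1 : R) S = 3 -> cut_weight a S != 0 ->
    exists S sigma, lighter_cut a e0 S sigma.
  move=> uS S0 cut3 aS.
  have [sigma [sigma1 neg]] := sign_flip (mulf_neq0 aS (invr_neq0 ae0)).
  exists S, sigma; split => //; first by apply/set0Pn; exists u.
  by rewrite cut3 mulrAC -mulrA; lra.
have pair_cut (S : {set 'I_4}) (u : 'I_4) : u \in S -> ord0 \notin S ->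
    cut_weight (fun=> 1 : R) S = 4 -> cut_weight a S = -2 * a e0 ->
    exists S sigma, lighter_cut a e0 S sigma.
  move=> uS S0 cut4 aS; exists S, 1; split => //; first by apply/set0Pn; exists u.
    exact: normr1.
  by rewrite cut4 aS mul1r mulrCA mulVf // mulr1; lra.
have [s1|] := eqVneq (cut_weight a [set 'v1]) 0; last first.
  by move/(star_cut _ 'v1); apply; rewrite ?inE //; eval_K4_cut; lra.
have [s2|] := eqVneq (cut_weight a [set 'v2]) 0; last first.
  by move/(star_cut _ 'v2); apply; rewrite ?inE //; eval_K4_cut; lra.
have [s3|] := eqVneq (cut_weight a [set 'v3]) 0; last first.
  by move/(star_cut _ 'v3); apply; rewrite ?inE //; eval_K4_cut; lra.
have [s0|] := eqVneq (cut_weight a (~: [set ord0])) 0; last first.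
  by move/(star_cut _ 'v1); apply; rewrite ?inE //; eval_K4_cut; lra.
move: s1 s2 s3 s0; eval_K4_cut => s1 s2 s3 s0.
have := mem_K4_edges e0; rewrite !inE.
case/predU1P=> [e0E|/predU1P[e0E|/predU1P[e0E|/predU1P[e0E|/predU1P[e0E|/eqP e0E]]]]].
- by apply: (pair_cut [set 'v2; 'v3] 'v2); rewrite ?inE // ?e0E; eval_K4_cut; lra.
- by apply: (pair_cut [set 'v1; 'v3] 'v1); rewrite ?inE // ?e0E; eval_K4_cut; lra.
- by apply: (pair_cut [set 'v1; 'v2] 'v1); rewrite ?inE // ?e0E; eval_K4_cut; lra.
- by apply: (pair_cut [set 'v1; 'v2] 'v1); rewrite ?inE // ?e0E; eval_K4_cut; lra.
- by apply: (pair_cut [set 'v1; 'v3] 'v1); rewrite ?inE // ?e0E; eval_K4_cut; lra.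
- by apply: (pair_cut [set 'v2; 'v3] 'v2); rewrite ?inE // ?e0E; eval_K4_cut; lra.
Qed.

Section Windmill.
Variable k : nat.
Local Notation n := (3 * k).+1.

(* The windmill: k copies of K_4 glued at the hub 0; block [j] has the vertices
   0, 3j+1, 3j+2, 3j+3, and [vtx j l] is its [l]-th vertex. *)
Definition vtx (j : 'I_k) (l : 'I_4) : 'I_n :=
  inord (if l == 0 :> nat then 0 else 3 * j + l)%N.

Lemma val_vtx j l : vtx j l = (if l == 0 :> nat then 0 else 3 * j + l)%N :> nat.
Proof.
rewrite inordK //; case: eqP => // _; have := ltn_ord j; have := ltn_ord l; lia.
Qed.

Lemma vtx_hub j : vtx j ord0 = ord0.
Proof. by apply: ord_inj; rewrite val_vtx. Qed.

Lemma vtx_mono j (l l' : 'I_4) : (l < l')%N -> (vtx j l < vtx j l')%N.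
Proof. rewrite !val_vtx; case: eqP; case: eqP; lia. Qed.

Definition edge (e : 'I_k * Pair 4) : Pair n :=
  exist _ (vtx e.1 (val e.2).1, vtx e.1 (val e.2).2) (vtx_mono e.1 (valP e.2)).

Lemma crosses_edge X j q : crosses X (edge (j, q)) = crosses (vtx j @^-1: X) q.
Proof. by rewrite /crosses /= !inE. Qed.

Lemma vtx_inj j : injective (vtx j).
Proof.
move=> l l' /(congr1 (@nat_of_ord _)); rewrite !val_vtx => eq_ll'; apply: ord_inj.
by move: eq_ll'; case: eqP; case: eqP; lia.
Qed.

Lemma vtx_onto (y : 'I_n) : y != ord0 -> exists j l, y = vtx j l.
Proof.
move=> y0; have y_pos : (0 < y)%N by rewrite lt0n.
have j_lt : ((y.-1) %/ 3 < k)%N by have := ltn_ord y; lia.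
have l_lt : (((y.-1) %% 3).+1 < 4)%N by rewrite ltnS ltn_mod.
exists (Ordinal j_lt), (Ordinal l_lt); apply: ord_inj; rewrite val_vtx /=.
by rewrite {1}(divn_eq y.-1 3); lia.
Qed.

Lemma mem_lift j j' (S : {set 'I_4}) l : ord0 \notin S ->
  (vtx j' l \in vtx j @: S) = (j' == j) && (l \in S).
Proof.
move=> S0; have [->|jj'] /= := eqVneq j' j; first by rewrite mem_imset //; exact: vtx_inj.
apply/imsetP => -[l' l'S] /(congr1 (@nat_of_ord _)).
have l'0 : l' != 0 :> nat.
  by apply: contraNneq S0 => l'0; rewrite (_ : ord0 = l') //; exact: ord_inj.
have jj'N : j' != j :> nat := jj'.
rewrite !val_vtx (negbTE l'0); case: ifP => /eqP l0; move: jj'N l'0.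
all: by have := ltn_ord l; have := ltn_ord l'; lia.
Qed.

Lemma crosses_lift j (S : {set 'I_4}) j' q : ord0 \notin S ->
  crosses (vtx j @: S) (edge (j', q)) = (j' == j) && crosses S q.
Proof. by move=> S0; rewrite /crosses /= !mem_lift //; case: (j' == j). Qed.

Lemma lift_proper j (S : {set 'I_4}) : S != set0 -> ord0 \notin S ->
  proper_nonempty (vtx j @: S).
Proof.
move=> Sn0 S0; rewrite /proper_nonempty imset_eq0 Sn0 /=.
apply: contraNneq S0 => ST; have : vtx j ord0 \in vtx j @: S by rewrite ST inE.
by rewrite mem_imset //; exact: vtx_inj.
Qed.

End Windmill.

Section WindmillWeights.
Variables (R : realType) (k : nat).
Local Notation n := (3 * k).+1.
Local Notation edge := (@edge k).

Lemma cut_weight_block (g : 'I_k * Pair 4 -> R) (X : {set 'I_n}) j :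
  (forall i, 0 <= g i) ->
  cut_weight (fun q => g (j, q)) (vtx j @^-1: X) <= cut_weight (extend edge g) X.
Proof.
move=> g_ge0; rewrite cut_weight_extend (bigID (fun i => i.1 == j)) /=.
apply: ler_wpDr; first by apply: sumr_ge0 => i _.
rewrite (eq_bigl (fun i => (i.1 == j) && crosses (vtx j @^-1: X) i.2)) ?sum_fibre //.
by move=> -[j' q] /=; rewrite andbC; case: eqP => // ->; rewrite crosses_edge.
Qed.

Lemma cut_weight_lift (g : 'I_k * Pair 4 -> R) j (S : {set 'I_4}) :
  ord0 \notin S ->
  cut_weight (extend edge g) (vtx j @: S) = cut_weight (fun q => g (j, q)) S.
Proof.
move=> S0; rewrite cut_weight_extend.
rewrite (eq_bigl (fun i => (i.1 == j) && crosses S i.2)) ?sum_fibre //.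
by move=> -[j' q]; exact: crosses_lift.
Qed.

Definition windmill : Pair n -> R := extend edge (fun=> 1).

Lemma windmill_ge0 : nonneg_weights windmill.
Proof. by move=> p; apply: extend_ge0 => i; exact: ler01. Qed.

(* Every cut of the windmill has weight at least 3: it separates some
   non-hub vertex from the hub, hence cuts the K_4 block of that vertex. *)
Lemma windmill_cut_ge3 (X : {set 'I_n}) : proper_nonempty X -> 3 <= cut_weight windmill X.
Proof.
case/andP=> Xn0 XnT.
have [y sep] : exists y, (y \in X) != (ord0 \in X).
  case: (boolP (ord0 \in X)) => X0; last by case/set0Pn: Xn0 => y yX; exists y; rewrite yX.
  by move: XnT; rewrite -properT => /properP[_ [y _ yX]]; exists y; rewrite (negbTE yX).
have [j [l yE]] : exists j l, y = vtx j l.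
  by apply: vtx_onto; apply: contra_neq sep => ->.
apply: le_trans (cut_weight_block X j (fun=> @ler01 R)).
by apply: (@K4_cut_ge3 _ _ l ord0); rewrite !inE vtx_hub -yE.
Qed.

(* Otherwise some nonzero perturbation [c] of the 6k edge weights is
   orthogonal to all queries asked, so the algorithm answers the same on
   [windmill + s c], whose minimum cut is below 3 for a suitable s by
   [K4_perturb] applied to the block of a largest coordinate of [c]. *)
Lemma windmill_queries (t : qtree R n) :
  solves_mincut t -> (6 * k <= num_queries t windmill)%N.
Proof.
move=> t_ok; rewrite leqNgt; apply/negP => few.
pose qs := queries t windmill.
have few_queries : (size qs < #|{: 'I_k * Pair 4}|)%N.
  rewrite size_queries card_prod card_ord card_Pair4.
  by move: (num_queries t windmill) few => m; lia.
have [c [[i0 ci0] c_orth]] :=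
  common_kernel (fun a i => nth (fun=> 0) qs a (edge i)) few_queries.
have same_run s : run t (shift windmill (extend edge c) s) = run t windmill.
  by apply: run_shift => a a_lt; rewrite lin_answer_extend; exact: c_orth.
have run_ge3 : 3 <= run t windmill.
  by have [[X [X_proper <-]] _] := t_ok _ windmill_ge0; exact: windmill_cut_ge3.
have [[j e0] _ c_max] := @arg_maxP _ R _ i0 predT (fun i => `|c i|) isT.
have ce0 : c (j, e0) != 0.
  by rewrite -normr_gt0; apply: lt_le_trans (c_max i0 isT); rewrite normr_gt0.
have [S [sigma [Sn0 S0 sigma1 light]]] := K4_perturb (a := fun q => c (j, q)) ce0.
set s := sigma / c (j, e0) in light *.
have w_ge0 : nonneg_weights (shift windmill (extend edge c) s).
  move=> p; rewrite /shift /windmill extend_affine; apply: extend_ge0 => i.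
  exact: unit_step_ge0 sigma1 ce0 (c_max i isT).
have [_ /(_ _ (lift_proper j Sn0 S0))] := t_ok _ w_ge0.
by rewrite same_run cut_weight_shift /windmill !cut_weight_lift // -/windmill; lra.
Qed.

End WindmillWeights.

Theorem theorem3 (R : realType) (k : nat) (t : qtree R (3 * k + 1)) :
  solves_mincut t ->
  exists w : Pair (3 * k + 1) -> R,
    nonneg_weights w /\ (2 * (3 * k + 1) - 2 <= num_queries t w)%N.
Proof.
rewrite addn1 in t *; move=> t_ok.
exists (@windmill R k); split; first exact: windmill_ge0.
by rewrite (_ : (2 * (3 * k).+1 - 2 = 6 * k)%N) ?windmill_queries //; lia.
Qed.
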